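(* Let $n,k$ be integers with $1\le k\le n-3$, let $F$ be a finite field with $|F|\ge 2n$, let $\{\lambda_{i,j}: i\in[n],\ j\in\{0,1\}\}$ be $2n$ distinct elements of $F$, and let $\mathcal{C}$ be the set of all $C=(C_1,\dots,C_n)$, $C_i=(c_{i,b,a}: b\in\{1,2,3\},\ a\in\{0,\dots,2^n-1\})$, satisfying $\sum_{i=1}^n \lambda_{i,a_i}^t c_{i,b,a}=0$ for all $t\in\{0,\dots,n-k-1\}$, $b\in\{1,2,3\}$, $a\in\{0,\dots,2^n-1\}$. Let $\mathcal{R}\subseteq[n]\setminus\{1,2\}$ with $|\mathcal{R}|=k+1$. Then for every $C\in\mathcal{C}$: (1) the values $\{c_{1,b,a}: a\in\{0,\dots,2^n-1\},\ b\in\{1,2\}\}\cup\{c_{2,1,a}+c_{2,2,a(1,a_1\oplus 1)}: a\in\{0,\dots,2^n-1\}\}$ are uniquely determined by the values $\{c_{i,1,a}+c_{i,2,a(1,a_1\oplus 1)}: a\in\{0,\dots,2^n-1\},\ i\in\mathcal{R}\}$; (2) the values $\{c_{2,b,a}: a\in\{0,\dots,2^n-1\},\ b\in\{1,3\}\}\cup\{c_{1,1,a}+c_{1,3,a(2,a_2\oplus 1)}: a\in\{0,\dots,2^n-1\}\}$ are uniquely determined by the values $\{c_{i,1,a}+c_{i,3,a(2,a_2\oplus 1)}: a\in\{0,\dots,2^n-1\},\ i\in\mathcal{R}\}$. (Here ''uniquely determined'' means: any two codewords of $\mathcal{C}$ that agree on the latter values agree on the former values.)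
   Context: $[n]=\{1,\dots,n\}$. For $a\in\{0,\dots,2^n-1\}$, $(a_1,\dots,a_n)\in\{0,1\}^n$ denotes its $n$-digit binary expansion, and $a$ is identified with this tuple. For $i\in[n]$, $u\in\{0,1\}$, $a(i,u)$ denotes the element obtained from $a$ by replacing the $i$th digit $a_i$ by $u$; $\oplus$ denotes addition modulo 2. *)

From mathcomp Require Import all_boot all_algebra.
Set Implicit Arguments. Unset Strict Implicit. Unset Printing Implicit Defensive.
Import GRing.Theory.
Local Open Scope ring_scope.

(* Indices: node i in [n] is represented by i : 'I_n (node i+1 <-> ordinal i);
   b in {1,2,3} by b : 'I_3 (b <-> ordinal b-1);
   a in {0,...,2^n-1} is identified with its binary expansion (a_1,...,a_n),
   represented as a : {ffun 'I_n -> bool} (digit a_{i+1} = a i). *)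
Definition word n := {ffun 'I_n -> bool}.

Definition setdig n (a : word n) (i : 'I_n) (u : bool) : word n :=
  [ffun j => if j == i then u else a j].

Definition flipdig n (a : word n) (i : 'I_n) : word n := setdig a i (~~ a i).

Definition codeword (F : Type) n := 'I_n -> 'I_3 -> word n -> F.

Definition in_code (F : fieldType) n k (lam : 'I_n -> bool -> F)
  (c : codeword F n) : Prop :=
  forall (t : nat) (b : 'I_3) (a : word n), (t < n - k)%N ->
    \sum_(i < n) (lam i (a i)) ^+ t * c i b a = 0.

From mathcomp Require Import all_boot all_algebra.
From mathcomp Require Import zify.
Set Implicit Arguments. Unset Strict Implicit. Unset Printing Implicit Defensive.
Import GRing.Theory.
Local Open Scope ring_scope.

(* Subtracting two codewords, it suffices to show that a codeword d whose
   coupled values on R vanish has the claimed values zero.  Fix a, a node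
   u outside R, and let a' be a with its u-th digit flipped.  Adding the
   parity checks of layer b at a and of layer b' at a' gives n - k power-sum
   equations in n + 1 unknowns: d_{i,b,a} + d_{i,b',a'} at the point
   lambda_{i,a_i} for i <> u, and d_{u,b,a}, d_{u,b',a'} at the two distinct
   points lambda_{u,a_u}, lambda_{u,1-a_u}.  The k + 1 unknowns indexed by R
   vanish, leaving a Vandermonde system in n - k unknowns with distinct
   points, whose only solution is zero. *)

Lemma big_option (R : Type) (idx : R) (op : Monoid.com_law idx) (T : finType)
    (f : option T -> R) :
  \big[op/idx]_(j : option T) f j = op (f None) (\big[op/idx]_(i : T) f (Some i)).
Proof.
rewrite (bigD1 None) //=; congr (op _ _).
rewrite (reindex_omap Some id) //=; last by case.
by apply: eq_bigl => i; rewrite eqxx.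
Qed.

Section PowerSums.

Variables (F : fieldType) (I : finType) (p x : I -> F) (N : nat).
Hypothesis power_sums_eq0 : forall t, (t < N)%N -> \sum_j p j ^+ t * x j = 0.

Lemma sum_horner_mul_eq0 (q : {poly F}) :
  (size q <= N)%N -> \sum_j q.[p j] * x j = 0.
Proof.
move=> size_q.
under eq_bigr => j _ do rewrite horner_coef mulr_suml.
rewrite exchange_big /= big1 // => i _.
under eq_bigr => j _ do rewrite -mulrA.
by rewrite -mulr_sumr power_sums_eq0 ?mulr0 // (leq_trans (ltn_ord i) size_q).
Qed.

Lemma power_sums_support_eq0 (S : {set I}) :
  injective p -> (#|S| <= N)%N -> (forall j, j \notin S -> x j = 0) ->
  forall j, x j = 0.
Proof.
move=> p_inj card_S x_out j0.
have [Sj0 | /x_out-> //] := boolP (j0 \in S).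
pose q := \prod_(z <- [seq p l | l in S :\ j0]) ('X - z%:P).
have /sum_horner_mul_eq0 : (size q <= N)%N.
  by rewrite size_prod_XsubC size_image; move: card_S; rewrite (cardsD1 j0) Sj0.
have q_root j : (j \in S :\ j0) = root q (p j).
  by rewrite root_prod_XsubC mem_image.
rewrite (bigD1 j0) //= big1 ?addr0 => [/eqP|j j_j0].
  rewrite mulf_eq0 => /orP[q_j0|/eqP //].
  by have := q_root j0; rewrite /root q_j0 !inE eqxx.
have [Sj | /x_out->] := boolP (j \in S); last by rewrite mulr0.
have /rootP-> : root q (p j) by rewrite -q_root !inE j_j0.
by rewrite mul0r.
Qed.

End PowerSums.

Lemma flipdig_at n (a : word n) i : flipdig a i i = ~~ a i.
Proof. by rewrite ffunE eqxx. Qed.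

Lemma flipdig_neq n (a : word n) i j : j != i -> flipdig a i j = a j.
Proof. by rewrite ffunE => /negbTE->. Qed.

Lemma flipdigK n (a : word n) i : flipdig (flipdig a i) i = a.
Proof.
apply/ffunP => j; have [->|ji] := eqVneq j i; first by rewrite !flipdig_at negbK.
by rewrite !flipdig_neq.
Qed.

Lemma in_codeB (F : fieldType) n k (lam : 'I_n -> bool -> F) (c c' : codeword F n) :
  in_code k lam c -> in_code k lam c' ->
  in_code k lam (fun i b a => c i b a - c' i b a).
Proof.
move=> hc hc' t b a ht; under eq_bigr do rewrite mulrBr.
by rewrite sumrB hc // hc' // subrr.
Qed.

Section CoupledSymbols.

Variables (F : fieldType) (n : nat) (lam : 'I_n -> bool -> F).
Hypothesis lam_inj : forall i j i' j', lam i j = lam i' j' -> i = i' /\ j = j'.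
Variables (d : codeword F n) (u : 'I_n) (b b' : 'I_3) (a : word n).

Local Notation a' := (flipdig a u).

Definition coupled_point (j : option 'I_n) : F :=
  if j is Some i then lam i (a i) else lam u (~~ a u).

Definition coupled_symbol (j : option 'I_n) : F :=
  match j with
  | Some i => if i == u then d u b a else d i b a + d i b' a'
  | None => d u b' a'
  end.

Lemma coupled_point_inj : injective coupled_point.
Proof. by move=> [i|] [j|] //= /lam_inj[-> //]; case: (a _). Qed.

Lemma coupled_power_sums_eq0 k : in_code k lam d ->
  forall t, (t < n - k)%N -> \sum_j coupled_point j ^+ t * coupled_symbol j = 0.
Proof.
move=> hd t ht.
have coupled_term i : lam i (a i) ^+ t * d i b a + lam i (a' i) ^+ t * d i b' a' =
    coupled_point (Some i) ^+ t * coupled_symbol (Some i) +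
    (if i == u then coupled_point None ^+ t * coupled_symbol None else 0).
  rewrite /=; have [->|iu] := eqVneq i u; first by rewrite flipdig_at.
  by rewrite flipdig_neq // mulrDr addr0.
have -> : \sum_j coupled_point j ^+ t * coupled_symbol j =
    \sum_i (lam i (a i) ^+ t * d i b a + lam i (a' i) ^+ t * d i b' a').
  rewrite big_option /= addrC [RHS](eq_bigr _ (fun i _ => coupled_term i)).
  by rewrite big_split /= -big_mkcond big_pred1_eq.
by rewrite big_split /= !hd ?addr0.
Qed.

Lemma coupled_symbol_eq0 k (R : {set 'I_n}) :
  #|R| = k.+1 -> u \notin R -> in_code k lam d ->
  (forall i, i \in R -> d i b a + d i b' a' = 0) ->
  forall j, coupled_symbol j = 0.
Proof.
move=> card_R uR hd dR.
apply: (power_sums_support_eq0 (coupled_power_sums_eq0 hd)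
          (S := None |: (Some @: ~: R))); first exact: coupled_point_inj.
  rewrite cardsU1 card_imset; last exact: Some_inj.
  have := cardsC R; rewrite card_ord card_R.
  by case: (_ \notin _); lia.
move=> [i|]; rewrite !inE ?eqxx ?orbT // mem_imset; last exact: Some_inj.
rewrite inE negbK => iR /=.
by have [iu|_] := eqVneq i u; [rewrite -iu iR in uR | exact: dR].
Qed.

End CoupledSymbols.

Lemma coupled_repair_eq (F : fieldType) n k (lam : 'I_n -> bool -> F)
    (R : {set 'I_n}) (u v : 'I_n) (b b' : 'I_3) (c c' : codeword F n) :
  (forall i j i' j', lam i j = lam i' j' -> i = i' /\ j = j') ->
  #|R| = k.+1 -> u \notin R -> v != u ->
  in_code k lam c -> in_code k lam c' ->
  (forall i a, i \in R ->
     c i b a + c i b' (flipdig a u) = c' i b a + c' i b' (flipdig a u)) ->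
  (forall a, c u b a = c' u b a /\ c u b' a = c' u b' a) /\
  (forall a, c v b a + c v b' (flipdig a u) = c' v b a + c' v b' (flipdig a u)).
Proof.
move=> lam_inj card_R uR vu hc hc' agree_R.
pose d : codeword F n := fun i b a => c i b a - c' i b a.
have dR a i : i \in R -> d i b a + d i b' (flipdig a u) = 0.
  by move=> iR; rewrite /d addrACA -opprD agree_R // subrr.
have d0 a := coupled_symbol_eq0 lam_inj card_R uR (in_codeB hc hc') (dR a).
split=> a; first split; apply: subr0_eq.
- by have := d0 a (Some u); rewrite /= eqxx.
- by have := d0 (flipdig a u) None; rewrite /= flipdigK.
- by have := d0 a (Some v); rewrite /= (negbTE vu) addrACA opprD.
Qed.

Theorem mainTheorem3 (F : finFieldType) (n k : nat)
  (hk1 : (1 <= k)%N) (hkn : (k <= n - 3)%N)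
  (h4 : (4 <= n)%N) (* implied by hk1, hkn; used to name nodes 1 and 2 *) (hF : (2 * n <= #|F|)%N)
  (lam : 'I_n -> bool -> F)
  (hlam : forall i j i' j', lam i j = lam i' j' -> i = i' /\ j = j')
  (R : {set 'I_n})
  (hR : forall i, i \in R -> (2 <= val i)%N)
  (hRcard : #|R| = k.+1) :
  let b1 : 'I_3 := @Ordinal 3 0 isT in
  let b2 : 'I_3 := @Ordinal 3 1 isT in
  let b3 : 'I_3 := @Ordinal 3 2 isT in
  let node1 : 'I_n := Ordinal (leq_trans (isT : (1 <= 4)%N) h4) in
  let node2 : 'I_n := Ordinal (leq_trans (isT : (2 <= 4)%N) h4) in
  forall c c' : codeword F n, in_code k lam c -> in_code k lam c' ->
  ((forall i a, i \in R ->
      c i b1 a + c i b2 (flipdig a node1) = c' i b1 a + c' i b2 (flipdig a node1)) ->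
   (forall a, c node1 b1 a = c' node1 b1 a /\ c node1 b2 a = c' node1 b2 a) /\
   (forall a, c node2 b1 a + c node2 b2 (flipdig a node1)
            = c' node2 b1 a + c' node2 b2 (flipdig a node1))) /\
  ((forall i a, i \in R ->
      c i b1 a + c i b3 (flipdig a node2) = c' i b1 a + c' i b3 (flipdig a node2)) ->
   (forall a, c node2 b1 a = c' node2 b1 a /\ c node2 b3 a = c' node2 b3 a) /\
   (forall a, c node1 b1 a + c node1 b3 (flipdig a node2)
            = c' node1 b1 a + c' node1 b3 (flipdig a node2))).
Proof.
move=> b1 b2 b3 node1 node2 c c' hc hc'.
have notin_R (i : 'I_n) : (val i < 2)%N -> i \notin R.
  by move=> small; apply/negP => /hR; rewrite leqNgt small.
by split; apply: (coupled_repair_eq hlam hRcard) => //; apply: notin_R.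
Qed.
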